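(* Let $T=(V,E)$ be a subtree of $T_{\mathrm{in}}$ and $S\subseteq V$. Suppose $(u,v)\in E$ satisfies $f(V_{-v}(u)\cup\{v\},v)>\mathcal{T}$ and $S\cap V_{-v}(u)=\emptyset$. Then there exist $u',v'\in V_{-v}(u)\cup\{v\}$ such that $(u',v')$ satisfies the peaking criterion.
   Context: Let $T_{\mathrm{in}}=(V_{\mathrm{in}},E_{\mathrm{in}})$ be a finite tree; subtrees are identified with their vertex sets (''$U$ is a subtree'' means $U$ induces a connected subgraph). $f:2^{V_{\mathrm{in}}}\times V_{\mathrm{in}}\to[0,+\infty]$ is minmax monotone: (1) $f(\{s\},s)=0$, and $f(U,s)=+\infty$ if $U$ is not a subtree or $s\notin U$; (2) $s\in U_1\subseteq U_2\Rightarrow f(U_1,s)\le f(U_2,s)$; (3) if $U$ is a subtree, $s\notin U$, and $s$ is adjacent to $u\in U$, then $f(U\cup\{s\},s)\ge f(U,u)$; (4) if $U$ is a subtree, $s\in U$, and $U_1,\dots,U_t$ are the vertex sets of the components of the tree induced by $U$ minus $s$, then $f(U,s)=\max_i f(U_i\cup\{s\},s)$. Fix $\mathcal{T}\ge0$. For a tree $T=(V,E)$ and an edge $(u,v)\in E$, $T_{-v}(u)$ denotes the component of $T-v$ containing $u$, with vertex set $V_{-v}(u)$. The ordered pair $(u,v)$ satisfies the peaking criterion (relative to $T$ and $S$) if $(u,v)\in E$, $V_{-v}(u)\cap S=\emptyset$, and $f(V_{-v}(u),u)\le\mathcal{T}<f(V_{-v}(u)\cup\{v\},v)$. *)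

From HB Require Import structures.
From mathcomp Require Import all_boot all_order all_algebra.
Set Implicit Arguments. Unset Strict Implicit. Unset Printing Implicit Defensive.
Import Order.TTheory GRing.Theory Num.Theory.
Local Open Scope ring_scope.

(* Extended nonnegative values [0,+oo]: [Some r] is the real r, [None] is +oo. *)
Definition ext_le (R : realDomainType) (x y : option R) : bool :=
  match y with
  | None => true
  | Some b => match x with None => false | Some a => a <= b end
  end.
Definition ext_lt (R : realDomainType) (x y : option R) : bool := ~~ ext_le y x.

Section Graph.
Variables (V : finType) (e : rel V).

Definition restr (A : {set V}) : rel V := [rel x y | [&& e x y, x \in A & y \in A]].

Definition connected_set (U : {set V}) : Prop :=
  forall x y, x \in U -> y \in U -> connect (restr U) x y.

Definition acyclic : Prop :=
  forall (x : V) (p : seq V), path e x p -> uniq (x :: p) -> (2 <= size p)%N ->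
    ~~ e (last x p) x.

Definition is_tree : Prop :=
  symmetric e /\ irreflexive e /\ connected_set [set: V] /\ acyclic.

(* subtrees are identified with vertex sets inducing a connected subgraph *)
Definition subtree (U : {set V}) : Prop := connected_set U.

(* vertex set of the connected component containing u of the graph induced by A
   (empty if u \notin A) *)
Definition comp (A : {set V}) (u : V) : {set V} :=
  [set w in A | connect (restr A) u w].

Definition Vminus (U : {set V}) (v u : V) : {set V} := comp (U :\ v) u.

Definition minmax_monotone (R : realDomainType) (f : {set V} -> V -> option R) : Prop :=
  [/\
      (forall U s, ext_le (Some 0) (f U s)),
      (forall s, f [set s] s = Some 0)
      /\ (forall U s, ~ (subtree U /\ s \in U) -> f U s = None),
      (forall U1 U2 s, subtree U1 -> subtree U2 -> s \in U1 -> U1 \subset U2 ->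
          ext_le (f U1 s) (f U2 s)),
      (forall U s u, subtree U -> s \notin U -> u \in U -> e s u ->
          ext_le (f U u) (f (s |: U) s))
    &
      (forall U s, subtree U -> s \in U -> U != [set s] ->
          (forall w, w \in U :\ s -> ext_le (f (comp (U :\ s) w :|: [set s]) s) (f U s))
          /\ (exists2 w, w \in U :\ s & f U s = f (comp (U :\ s) w :|: [set s]) s))].

Definition peaking (R : realDomainType) (f : {set V} -> V -> option R) (tau : R)
    (VT S : {set V}) (u v : V) : Prop :=
  [/\ [&& e u v, u \in VT & v \in VT],
      Vminus VT v u :&: S = set0,
      ext_le (f (Vminus VT v u) u) (Some tau)
    & ext_lt (Some tau) (f (v |: Vminus VT v u) v)].

End Graph.

From Pilot Require Import Defs.
From HB Require Import structures.
From mathcomp Require Import all_boot all_order all_algebra.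
Import Order.TTheory GRing.Theory Num.Theory.
Local Open Scope ring_scope.
Set Implicit Arguments. Unset Strict Implicit.

(* Walk down from (u, v) into W = V_{-v}(u). If f(W, u) <= tau, the edge (u, v)
   peaks. Otherwise W is more than {u}, since f({u}, u) = 0 <= tau, so by (4) some
   component C of W - u has f(C + u, u) = f(W, u) > tau. In a tree, C is
   V_{-u}(u1) for the neighbour u1 of u in C, so (u1, u) satisfies the hypotheses
   again, with the strictly smaller vertex set C instead of W. *)

Section Components.
Variables (V : finType) (e : rel V).
Implicit Types (A B : {set V}) (u v w x y z : V).

Lemma path_restr_all A x p : path (restr e A) x p -> all (mem A) p.
Proof.
elim: p x => [|y p IHp] x //= /andP [/and3P [_ _ yA] yp].
by rewrite yA (IHp y).
Qed.

Lemma connect_restr_mem A x y : x \in A -> connect (restr e A) x y -> y \in A.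
Proof.
move=> xA /connectP [p xp ->]; have := mem_last x p.
by rewrite inE => /predU1P [-> //|]; apply: (allP (path_restr_all xp)).
Qed.

Lemma path_restr_in A B x p :
  all (mem B) (x :: p) -> path (restr e A) x p -> path (restr e B) x p.
Proof.
apply: sub_in_path => a b aB bB /and3P [eab _ _].
by rewrite /restr /= eab aB bB.
Qed.

Lemma connect_restr_sub A B x y :
  A \subset B -> connect (restr e A) x y -> connect (restr e B) x y.
Proof.
move=> /subsetP AB; apply: connect_sub => a b /and3P [eab aA bA].
by apply: connect1; rewrite /restr /= eab !AB.
Qed.

Lemma comp_restrict A B x :
  B \subset A -> x \in B -> Defs.comp e A x \subset B -> Defs.comp e B x = Defs.comp e A x.
Proof.
move=> BA xB /subsetP compB; apply/setP => y; apply/idP/idP.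
  rewrite !inE => /andP [yB xy].
  by rewrite (subsetP BA _ yB) (connect_restr_sub BA xy).
move=> yA; have yB := compB _ yA; rewrite inE yB /=.
move: yA; rewrite inE => /andP [_ /connectP [p xp yE]].
have pA : all (mem A) (x :: p) by rewrite /= (subsetP BA _ xB) (path_restr_all xp).
have pB : all (mem B) (x :: p).
  apply/allP => z zp; apply: compB.
  by rewrite inE [z \in A](allP pA _ zp) (path_connect xp zp).
by apply/connectP; exists p; first exact: path_restr_in pB xp.
Qed.

Lemma Vminus_self (VT : {set V}) u v : u != v -> u \in VT -> u \in Vminus e VT v u.
Proof. by move=> uv uVT; rewrite !inE uv uVT connect0. Qed.

Section Symmetric.
Hypothesis e_sym : symmetric e.

Lemma restr_sym A : symmetric (restr e A).
Proof.
by move=> x y; rewrite /restr /= e_sym; case: (x \in A); case: (y \in A); rewrite ?andbF.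
Qed.

Lemma comp_eq A x y : connect (restr e A) x y -> Defs.comp e A x = Defs.comp e A y.
Proof.
move=> xy; have yx : connect (restr e A) y x.
  by rewrite (sym_connect_sym (restr_sym A)).
apply/setP => z; rewrite !inE.
by case: (z \in A) => //=; apply/idP/idP; apply: connect_trans.
Qed.

Lemma comp_connected A x : x \in A -> connected_set e (Defs.comp e A x).
Proof.
move=> xA y z; set C := Defs.comp e A x.
have CC : Defs.comp e C x = C.
  apply: comp_restrict => //; last by rewrite inE xA connect0.
  by apply/subsetP => w; rewrite inE => /andP [].
rewrite -{1 2}CC !inE => /andP [_ xy] /andP [_ xz].
by apply: connect_trans _ xz; rewrite (sym_connect_sym (restr_sym C)).
Qed.

End Symmetric.

Section Tree.
Hypothesis e_tree : is_tree e.

Lemma tree_edge_bridge u v :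
  e u v -> ~~ connect [rel x y | e x y && ((x, y) != (u, v))] u v.
Proof.
have [e_sym [e_irr [_ e_acyclic]]] := e_tree.
move=> euv; apply/negP => /connectP [p up vE].
case: (shortenP up) vE => {up}p up p_uniq _ vE.
have up_e : path e u p by apply: sub_path up => x y /andP [].
case: p up up_e p_uniq vE => [|x [|y q]] up up_e p_uniq /= vE.
- by move: euv; rewrite vE e_irr.
- by move: up; rewrite /= -vE eqxx andbF.
- by move: (e_acyclic _ _ up_e p_uniq isT); rewrite /= -vE e_sym euv.
Qed.

Lemma connect_restrD1_neq A u v x y :
  e u v -> e u x -> x != v -> connect (restr e (A :\ u)) x y -> y != v.
Proof.
move=> euv eux xv xy; apply: contraNneq (tree_edge_bridge euv) => yv.
apply: (@connect_trans _ _ x); first by apply: connect1; rewrite /= eux xpair_eqE eqxx xv.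
rewrite -yv; apply: connect_sub xy => a b /and3P [eab aAu _].
rewrite !inE in aAu; case/andP: aAu => au _.
by rewrite connect1 //= eab xpair_eqE (negbTE au).
Qed.

Lemma Vminus_component VT u v w :
  e u v -> w \in Vminus e VT v u :\ u ->
  exists u1, [/\ e u1 u, u1 \in VT &
    Vminus e VT u u1 = Defs.comp e (Vminus e VT v u :\ u) w].
Proof.
have e_sym := e_tree.1.
set W := Vminus e VT v u => euv wW.
have [wu uw] : w != u /\ connect (restr e (VT :\ v)) u w.
  by move: wW; rewrite !inE => /andP [-> /andP [_ ->]].
case/connectP: uw => p up wE; case: (shortenP up) wE => {up}p up p_uniq _ wE.
case: p up p_uniq wE => [|u1 q] up p_uniq wE; first by rewrite wE eqxx in wu.
have /and3P [euu1 uD u1D] : restr e (VT :\ v) u u1 by case/andP: up.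
have u1q_W : all (mem (W :\ u)) (u1 :: q).
  apply/allP => z zq.
  have uz : connect (restr e (VT :\ v)) u z.
    by apply: (path_connect up); rewrite inE zq orbT.
  have zu : z != u by apply: contraTneq zq => ->; case/andP: p_uniq.
  have zD : z \in VT :\ v := connect_restr_mem uD uz.
  by change (z \in W :\ u); rewrite in_setD1 zu /W /Vminus /Defs.comp inE zD uz.
have u1W : u1 \in W :\ u by case/andP: u1q_W.
have u1w : connect (restr e (W :\ u)) u1 w.
  apply/connectP; exists q => //.
  by case/andP: up => _; apply: path_restr_in u1q_W.
have u1u : u1 != u by move: u1W; rewrite in_setD1 => /andP [].
have [u1v u1VT] : u1 != v /\ u1 \in VT by move: u1D; rewrite in_setD1 => /andP.
(* No cycle through the edge (u, v): the component of u1 in VT - u misses v. *)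
have C_v : Defs.comp e (VT :\ u) u1 \subset VT :\ u :\ v.
  apply/subsetP => z; rewrite inE => /andP [zD u1z].
  by rewrite in_setD1 zD andbT (connect_restrD1_neq euv euu1 u1v u1z).
have C_W : Defs.comp e (VT :\ u) u1 \subset W :\ u.
  apply/subsetP => z zC.
  have := subsetP C_v z zC; rewrite !inE => /andP [zv /andP [zu zVT]].
  rewrite zu zv zVT /=; rewrite -(comp_restrict (subD1set _ _) _ C_v) in zC; last first.
    by rewrite !inE u1v u1u u1VT.
  move: zC; rewrite inE => /andP [_ u1z]; apply: (@connect_trans _ _ u1).
    by apply: connect1; rewrite /restr /= euu1 uD u1D.
  apply: connect_restr_sub u1z; apply/subsetP => a.
  by rewrite !inE => /andP [-> /andP [_ ->]].
have WuVT : W :\ u \subset VT :\ u.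
  by apply/subsetP => a; rewrite !inE => /andP [-> /andP [/andP [_ ->] _]].
exists u1; split; rewrite 1?e_sym //.
by rewrite -(comp_eq e_sym u1w) (comp_restrict WuVT u1W C_W).
Qed.

End Tree.
End Components.

Section Descent.
Variables (R : realDomainType) (V : finType) (e : rel V).
Variables (f : {set V} -> V -> option R) (tau : R) (VT : {set V}).
Hypotheses (e_tree : is_tree e) (f_mm : minmax_monotone e f) (tau_ge0 : 0 <= tau).

Lemma peaking_descent u v :
  e u v -> u \in VT -> ext_lt (Some tau) (f (Vminus e VT v u) u) ->
  exists u1, [/\ e u1 u, u1 \in VT, ext_lt (Some tau) (f (u |: Vminus e VT u u1) u)
    & Vminus e VT u u1 \subset Vminus e VT v u :\ u].
Proof.
have [_ [e_irr _]] := e_tree; have [_ [f_single _] _ _ f_max] := f_mm.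
set W := Vminus e VT v u => euv uVT f_gt.
have uv : u != v by apply: contraTneq euv => ->; rewrite e_irr.
have uW : u \in W := Vminus_self e uv uVT.
have W_tree : subtree e W by apply: (comp_connected e_tree.1); rewrite ?inE ?uv.
have W_big : W != [set u] by apply: contra f_gt => /eqP ->; rewrite f_single /= tau_ge0.
have [_ [w wW f_eq]] := f_max W u W_tree uW W_big.
have [u1 [eu1u u1VT compE]] := Vminus_component e_tree euv wW.
exists u1; split => //; last by rewrite compE; apply/subsetP => x; rewrite inE => /andP [].
by rewrite compE setUC -f_eq.
Qed.

End Descent.

Theorem lemma2 (R : realDomainType) (V : finType) (e : rel V)
    (f : {set V} -> V -> option R) (tau : R) (VT S : {set V}) (u v : V) :
  is_tree e -> minmax_monotone e f -> 0 <= tau ->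
  subtree e VT -> S \subset VT ->
  [&& e u v, u \in VT & v \in VT] ->
  ext_lt (Some tau) (f (v |: Vminus e VT v u) v) ->
  S :&: Vminus e VT v u = set0 ->
  exists u' v', [/\ u' \in v |: Vminus e VT v u, v' \in v |: Vminus e VT v u
                  & peaking e f tau VT S u' v'].
Proof.
move=> e_tree f_mm tau_ge0 _ _ /and3P [euv uVT vVT].
have [n] := ubnP #|Vminus e VT v u|.
elim: n => // n IHn in u v euv uVT vVT *; rewrite ltnS => W_card f_gt S_W.
have uv : u != v by apply: contraTneq euv => ->; rewrite e_tree.2.1.
have uW := Vminus_self e uv uVT.
have [f_le | f_gt_u] := boolP (ext_le (f (Vminus e VT v u) u) (Some tau)).
  exists u, v; split; rewrite ?setU11 ?in_setU1 ?uW ?orbT //.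
  by split; rewrite ?euv ?uVT ?vVT // setIC.
have [u1 [eu1u u1VT f_gt1 sub]] := peaking_descent e_tree f_mm tau_ge0 euv uVT f_gt_u.
have [|||u' [v' [u'_in v'_in peak]]] := IHn u1 u eu1u u1VT uVT.
- apply: leq_trans W_card.
  by rewrite (cardsD1 u (Vminus e VT v u)) uW add1n ltnS subset_leq_card.
- exact: f_gt1.
- by apply/eqP; rewrite -subset0 -S_W setIS // (subset_trans sub) ?subD1set.
have sub_u : u |: Vminus e VT u u1 \subset v |: Vminus e VT v u.
  rewrite subUset sub1set in_setU1 uW orbT (subset_trans sub) //.
  exact: subset_trans (subD1set _ _) (subsetUr _ _).
by exists u', v'; split => //; apply: (subsetP sub_u).
Qed.
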